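(* Let $(R,\mathfrak m,k)$ be a Noetherian local ring of dimension $d$, $j\ge2$, and $M$ a finitely generated $R$-module with $\operatorname{pd}_RM=1$. If $M$ satisfies the $(SW_j)$ condition and $\beta_1^R(M)\ge d$, then $\beta_t^R(\mathcal S_j(M))\ge\binom{d}{t}$ for all $t=0,1,\dots,\operatorname{pd}_R\mathcal S_j(M)$.
   Context: $\beta_i^R(N)$ is the $i$-th Betti number (rank of the $i$-th module in a minimal free resolution of $N$). $\mathcal S_j(M)$ is the $j$-th graded component of the symmetric algebra $\mathcal S_R(M)$. For a free module $F$ of finite rank, $D_a(F)$ is the $a$-th divided power and $\Lambda^aF$ the $a$-th exterior power. For a minimal free resolution $\mathbf F_\bullet:0\to F_1\xrightarrow{\phi_1}F_0$ of $M$ (i.e. $\operatorname{Im}\phi_1\subseteq\mathfrak mF_0$), the complex $\mathcal S_j\mathbf F_\bullet$ is $0\to D_{j-l}F_0\otimes\Lambda^lF_1\to\cdots\to D_{j-1}F_0\otimes\Lambda^1F_1\to D_jF_0$, $l=\min\{\operatorname{rank}F_1,j\}$, with $(\mathcal S_j\mathbf F_\bullet)_t=D_{j-t}F_0\otimes\Lambda^tF_1$ and differential (up to sign) $f_1^{(c_1)}\cdots f_r^{(c_r)}\otimes(e_{1}\wedge\cdots\wedge e_{t})\mapsto\sum_s(-1)^s f_1^{(c_1)}\cdots f_r^{(c_r)}\cup\phi_1(e_{s})\otimes e_1\wedge\cdots\widehat{e_s}\cdots\wedge e_t$, where $\cup$ multiplies a divided power monomial by a basis element $f_m$ by raising the exponent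 of $f_m$ by one (extended linearly). $M$ satisfies the $(SW_j)$ condition if $\mathcal S_j\mathbf F_\bullet$ is a finite free resolution of $\mathcal S_j(M)$. Standing assumption: the characteristic of $R$ is such that this construction is a complex (e.g. small integers invertible in $R$). *)

From mathcomp Require Import all_boot all_order all_algebra all_fingroup.
Set Implicit Arguments. Unset Strict Implicit. Unset Printing Implicit Defensive.
Import GRing.Theory.
Local Open Scope ring_scope.

Section Defs.
Variable R : comUnitRingType.

Definition is_ideal (I : R -> Prop) : Prop :=
  I 0 /\ (forall x y, I x -> I y -> I (x + y)) /\ (forall r x, I x -> I (r * x)).

Definition is_prime (P : R -> Prop) : Prop :=
  is_ideal P /\ ~ P 1 /\ (forall x y, P (x * y) -> P x \/ P y).

Definition noetherian : Prop :=
  forall I : R -> Prop, is_ideal I ->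
    exists n (g : 'I_n -> R), forall x, I x <-> exists c : 'I_n -> R, x = \sum_i c i * g i.

(* local ring: the non-units form an ideal (the maximal ideal m) *)
Definition local_ring : Prop :=
  forall x y : R, x \notin GRing.unit -> y \notin GRing.unit -> x + y \notin GRing.unit.

Definition in_max_ideal (x : R) : bool := x \notin GRing.unit.

Definition prime_chain (n : nat) (P : nat -> R -> Prop) : Prop :=
  (forall i, (i <= n)%N -> is_prime (P i)) /\
  (forall i, (i < n)%N -> (forall x, P i x -> P i.+1 x) /\ exists x, P i.+1 x /\ ~ P i x).

Definition krull_dim (d : nat) : Prop :=
  (exists P, prime_chain d P) /\ ~ (exists P, prime_chain d.+1 P).

Definition lin (U V : lmodType R) (f : U -> V) : Prop :=
  forall (a : R) (u v : U), f (a *: u + v) = a *: f u + f v.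

Definition fin_gen (M : lmodType R) : Prop :=
  exists n (g : 'I_n -> M), forall x, exists c : 'I_n -> R, x = \sum_i c i *: g i.

(* free resolution  ... -> R^(rk 2) -> R^(rk 1) -> R^(rk 0) -> N -> 0,
   row-vector convention: the map F_(i+1) -> F_i is v |-> v *m dm i *)
Definition is_free_res (N : lmodType R) (rk : nat -> nat)
  (dm : forall i, 'M[R]_(rk i.+1, rk i)) (aug : 'rV[R]_(rk 0) -> N) : Prop :=
  lin aug /\ (forall y, exists v, aug v = y) /\
  (forall v, aug v = 0 <-> exists w, v = w *m dm 0) /\
  (forall i (v : 'rV[R]_(rk i.+1)), v *m dm i = 0 <-> exists w, v = w *m dm i.+1).

Definition minimal_res (rk : nat -> nat) (dm : forall i, 'M[R]_(rk i.+1, rk i)) : Prop :=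
  forall i a b, in_max_ideal (dm i a b).

Definition betti (N : lmodType R) (t n : nat) : Prop :=
  exists rk dm aug, @is_free_res N rk dm aug /\ minimal_res dm /\ rk t = n.

Definition pdim (N : lmodType R) (p : nat) : Prop :=
  exists rk dm aug, @is_free_res N rk dm aug /\ minimal_res dm /\
    rk p <> 0%N /\ (forall i, (p < i)%N -> rk i = 0%N).

Definition upd (M : lmodType R) (j : nat) (x : 'I_j -> M) (k : 'I_j) (y : M) : 'I_j -> M :=
  fun i => if i == k then y else x i.

Definition multilinear (M Q : lmodType R) (j : nat) (nu : ('I_j -> M) -> Q) : Prop :=
  forall x k (a : R) (u v : M),
    nu (upd x k (a *: u + v)) = a *: nu (upd x k u) + nu (upd x k v).

Definition symmetric_map (M Q : lmodType R) (j : nat) (nu : ('I_j -> M) -> Q) : Prop :=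
  forall (s : 'S_j) x, nu (fun i => x (s i)) = nu x.

Definition sym_power (M : lmodType R) (j : nat) (S : lmodType R) (mu : ('I_j -> M) -> S) : Prop :=
  multilinear mu /\ symmetric_map mu /\
  forall (Q : lmodType R) (nu : ('I_j -> M) -> Q), multilinear nu -> symmetric_map nu ->
    exists g : S -> Q, lin g /\ (forall x, g (mu x) = nu x) /\
      (forall g' : S -> Q, lin g' -> (forall x, g' (mu x) = nu x) -> forall s, g' s = g s).

(* basis of (S_j F)_t = D_(j-t)F0 (x) Lambda^t F1: pairs (c, E) with c a divided power
   monomial (exponent vector) of degree j - t and E a t-subset of the basis of F1 *)
Definition SBasis (j f0 f1 : nat) := ({ffun 'I_f0 -> 'I_j.+1} * {set 'I_f1})%type.

Definition inB (j f0 f1 : nat) (t : nat) (b : SBasis j f0 f1) : bool :=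
  [&& (t <= j)%N, #|b.2| == t & (\sum_i (b.1 i : nat) == j - t)%N].

Definition incr (j f0 : nat) (c : {ffun 'I_f0 -> 'I_j.+1}) (m : 'I_f0) : {ffun 'I_f0 -> 'I_j.+1} :=
  [ffun i => if i == m then inord (c i).+1 else c i].

(* coefficient of the basis element b' in the differential of b:
   f^(c) (x) e_E |-> sum_s (-1)^s f^(c) \cup phi(e_s) (x) e_(E \ e_s) *)
Definition Scoef (j f0 f1 : nat) (phi : 'M[R]_(f1, f0)) (b b' : SBasis j f0 f1) : R :=
  \sum_(e in b.2) \sum_(m : 'I_f0)
     ((b'.2 == b.2 :\ e) && (b'.1 == incr b.1 m))%:R *
     ((-1) ^+ #|[set x in b.2 | (x < e)%N]| * phi e m).

Definition Sdiff (j f0 f1 : nat) (phi : 'M[R]_(f1, f0)) (v : SBasis j f0 f1 -> R)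
  (b' : SBasis j f0 f1) : R := \sum_b v b * Scoef phi b b'.

Definition supported (j f0 f1 t : nat) (v : SBasis j f0 f1 -> R) : Prop :=
  forall b, ~~ inB t b -> v b = 0.

Definition mono_seq (M : lmodType R) (j f0 : nat) (pi : 'rV[R]_f0 -> M)
  (c : {ffun 'I_f0 -> 'I_j.+1}) : 'I_j -> M :=
  fun i => nth 0 (flatten [seq nseq (c m) (pi (delta_mx 0 m)) | m <- enum 'I_f0]) i.

(* augmentation D_j F0 -> S_j(M) induced by pi *)
Definition Saug (M S : lmodType R) (j f0 f1 : nat) (pi : 'rV[R]_f0 -> M)
  (mu : ('I_j -> M) -> S) (v : SBasis j f0 f1 -> R) : S :=
  \sum_(b | inB 0 b) v b *: mu (mono_seq pi b.1).

Definition Scomplex_resolves (M S : lmodType R) (j f0 f1 : nat) (phi : 'M[R]_(f1, f0))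
  (pi : 'rV[R]_f0 -> M) (mu : ('I_j -> M) -> S) : Prop :=
  (forall y, exists v : SBasis j f0 f1 -> R, supported 0 v /\ Saug pi mu v = y) /\
  (forall v : SBasis j f0 f1 -> R, supported 0 v ->
     (Saug pi mu v = 0 <-> exists w : SBasis j f0 f1 -> R, supported 1 w /\ forall b, v b = Sdiff phi w b)) /\
  (forall t (v : SBasis j f0 f1 -> R), (1 <= t)%N -> supported t v ->
     ((forall b, Sdiff phi v b = 0) <->
      exists w : SBasis j f0 f1 -> R, supported t.+1 w /\ forall b, v b = Sdiff phi w b)).

Definition rk2 (f0 f1 : nat) (i : nat) : nat :=
  match i with 0 => f0 | 1 => f1 | _ => 0%N end.

Definition dm2 (f0 f1 : nat) (phi : 'M[R]_(f1, f0)) :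
  forall i, 'M[R]_(rk2 f0 f1 i.+1, rk2 f0 f1 i) :=
  fun i => match i return 'M[R]_(rk2 f0 f1 i.+1, rk2 f0 f1 i) with
           | 0 => phi | _.+1 => 0 end.

Definition SW (M : lmodType R) (j : nat) (S : lmodType R) (mu : ('I_j -> M) -> S) : Prop :=
  exists f0 f1 (phi : 'M[R]_(f1, f0)) (pi : 'rV[R]_f0 -> M),
    is_free_res (dm2 phi) pi /\ minimal_res (dm2 phi) /\
    Scomplex_resolves phi pi mu.

End Defs.

From mathcomp Require Import all_boot all_order all_algebra all_fingroup.
From mathcomp Require Import zify.
Set Implicit Arguments. Unset Strict Implicit. Unset Printing Implicit Defensive.
Import GRing.Theory.
Local Open Scope ring_scope.

(* Under (SW_j) the complex [S_j F] is a free resolution of [S_j(M)] whose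
   differentials are built from the entries of [phi], so it is minimal; hence
   [beta_t(S_j M)] is the rank of [D_(j-t) F0 (x) Lambda^t F1], which is at least
   [C(rank F1, t) >= C(d, t)] once [F0 <> 0] and [t <= j], and both are forced by
   [t <= pd S_j(M)].  Betti numbers are well defined because a minimal resolution
   has ranks no larger than any resolution of the same module: comparison maps
   [f], [g] satisfy [f g = 1] modulo the maximal ideal and the image of the
   differential, and the latter is inside the maximal ideal, so [f g] is invertible. *)

Section LocalRing.
Variable R : comUnitRingType.
Hypothesis R_local : local_ring R.

Section MaxIdeal.

Lemma max_ideal0 : in_max_ideal (0 : R).
Proof. by rewrite /in_max_ideal unitr0. Qed.

Lemma max_ideal1 : ~~ in_max_ideal (1 : R).
Proof. by rewrite /in_max_ideal unitr1. Qed.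

Lemma max_idealN (x : R) : in_max_ideal (- x) = in_max_ideal x.
Proof. by rewrite /in_max_ideal unitrN. Qed.

Lemma max_idealD (x y : R) :
  in_max_ideal x -> in_max_ideal y -> in_max_ideal (x + y).
Proof. exact: R_local. Qed.

Lemma max_idealMl (x y : R) : in_max_ideal y -> in_max_ideal (x * y).
Proof. by rewrite /in_max_ideal unitrM; apply: contra => /andP[]. Qed.

Lemma max_idealMr (x y : R) : in_max_ideal x -> in_max_ideal (x * y).
Proof. by rewrite mulrC; apply: max_idealMl. Qed.

Lemma max_ideal_sum (I : Type) (r : seq I) (P : pred I) (F : I -> R) :
  (forall i, P i -> in_max_ideal (F i)) -> in_max_ideal (\sum_(i <- r | P i) F i).
Proof.
by move=> FP; apply: (big_ind (fun x => in_max_ideal x)) => //; exact: max_ideal0.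
Qed.

Lemma unit_max_ideal_subr1 (x : R) : in_max_ideal (x - 1) -> x \is a GRing.unit.
Proof.
move=> x1; apply/negPn/negP => x_nonunit.
by move: max_ideal1; rewrite -[1](subKr x) max_idealD // max_idealN.
Qed.

Lemma max_ideal_prod_subr1 (I : finType) (F : I -> R) :
  (forall i, in_max_ideal (F i - 1)) -> in_max_ideal (\prod_i F i - 1).
Proof.
move=> F1; apply: (big_ind (fun p => in_max_ideal (p - 1))) => [||i _]; last exact: F1.
  by rewrite subrr max_ideal0.
move=> p q p1 q1.
have -> : p * q - 1 = (p - 1) * q + (q - 1) by rewrite mulrBl mul1r addrA subrK.
by rewrite max_idealD // max_idealMr.
Qed.

End MaxIdeal.

Section MaxIdealMatrix.

Definition max_ideal_mx m n (A : 'M[R]_(m, n)) := forall i k, in_max_ideal (A i k).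

Lemma max_ideal_mx0 m n : max_ideal_mx (0 : 'M[R]_(m, n)).
Proof. by move=> i k; rewrite mxE max_ideal0. Qed.

Lemma max_ideal_mxD m n (A B : 'M[R]_(m, n)) :
  max_ideal_mx A -> max_ideal_mx B -> max_ideal_mx (A + B).
Proof. by move=> mA mB i k; rewrite mxE max_idealD. Qed.

Lemma max_ideal_mulmxl m n p (A : 'M[R]_(m, n)) (B : 'M[R]_(n, p)) :
  max_ideal_mx A -> max_ideal_mx (A *m B).
Proof. by move=> mA i k; rewrite mxE; apply: max_ideal_sum => l _; apply: max_idealMr. Qed.

Lemma max_ideal_mulmxr m n p (A : 'M[R]_(m, n)) (B : 'M[R]_(n, p)) :
  max_ideal_mx B -> max_ideal_mx (A *m B).
Proof. by move=> mB i k; rewrite mxE; apply: max_ideal_sum => l _; apply: max_idealMl. Qed.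

(* Leibniz: the identity permutation contributes a product of [1 - E i i],
   every other one a factor [- E i (s i)] with [s i != i]. *)
Lemma unitmx_1Bmx n (E : 'M[R]_n) : max_ideal_mx E -> 1%:M - E \in unitmx.
Proof.
move=> mE; rewrite unitmxE; apply: unit_max_ideal_subr1.
rewrite /determinant (bigD1 1%g) //= odd_perm1 expr0 mul1r addrAC max_idealD //.
  apply: max_ideal_prod_subr1 => i.
  by rewrite perm1 !mxE eqxx addrAC subrr add0r max_idealN.
apply: max_ideal_sum => s s_neq1.
have [i si_neq_i] : exists i, s i != i.
  apply/existsP; rewrite -negb_forall; apply: contra s_neq1 => /forallP s_id.
  by apply/eqP/permP => i; rewrite perm1; apply/eqP.
rewrite max_idealMl // (bigD1 i) //= max_idealMr //.
by rewrite !mxE eq_sym (negbTE si_neq_i) add0r max_idealN.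
Qed.

End MaxIdealMatrix.

Section Linear.
Variables (U V : lmodType R) (f : U -> V).
Hypothesis f_lin : lin f.

Lemma lin0 : f 0 = 0.
Proof.
have := f_lin 1 0 0; rewrite scaler0 addr0 scale1r => /(congr1 (fun x => x - f 0)).
by rewrite subrr addrK.
Qed.

Lemma linD u v : f (u + v) = f u + f v.
Proof. by have := f_lin 1 u v; rewrite !scale1r. Qed.

Lemma linZ a u : f (a *: u) = a *: f u.
Proof. by have := f_lin a u 0; rewrite !addr0 lin0 addr0. Qed.

Lemma linB u v : f (u - v) = f u - f v.
Proof. by rewrite linD -scaleN1r linZ scaleN1r. Qed.

Lemma lin_sum (I : Type) (r : seq I) (P : pred I) (F : I -> U) :
  f (\sum_(i <- r | P i) F i) = \sum_(i <- r | P i) f (F i).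
Proof. exact: (big_morph f linD lin0). Qed.

End Linear.

Lemma lin_mulmx_basis (N : lmodType R) n n' (g : 'rV[R]_n -> N) (g' : 'rV[R]_n' -> N)
    (F : 'M[R]_(n, n')) :
  lin g -> lin g' -> (forall r, g' (row r F) = g 'e_r) -> forall v, g' (v *m F) = g v.
Proof.
move=> g_lin g'_lin gF v.
rewrite {1}(row_sum_delta v) mulmx_suml (lin_sum g'_lin).
rewrite {2}(row_sum_delta v) (lin_sum g_lin); apply: eq_bigr => k _.
by rewrite -scalemxAl (linZ g'_lin) (linZ g_lin) -rowE gF.
Qed.

Lemma mulmx_lift_rows a n p (B : 'M[R]_(n, p)) (X : 'M[R]_(a, p)) :
  (forall r, exists w, row r X = w *m B) -> exists Y, X = Y *m B.
Proof.
case/fin_all_exists => w Xw; exists (\matrix_r w r).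
by apply/row_matrixP => r; rewrite row_mul rowK.
Qed.

Section FreeResolution.
Variables (N : lmodType R) (rk : nat -> nat) (dm : forall i, 'M[R]_(rk i.+1, rk i))
  (aug : 'rV[R]_(rk 0) -> N).
Hypothesis dm_res : is_free_res dm aug.

Lemma free_res_lin : lin aug.
Proof. by case: dm_res. Qed.

Lemma free_res_aug_dm0 w : aug (w *m dm 0) = 0.
Proof. by case: dm_res => _ [_ [aug_ker _]]; apply/aug_ker; exists w. Qed.

Lemma free_res_dm_dm i : dm i.+1 *m dm i = 0.
Proof.
case: dm_res => _ [_ [_ exact_dm]].
by apply/row_matrixP => r; rewrite row_mul row0; apply/exact_dm; exists 'e_r; rewrite rowE.
Qed.

Lemma free_res_lift_ker i a (X : 'M[R]_(a, rk i.+1)) :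
  X *m dm i = 0 -> exists Y : 'M[R]_(a, rk i.+2), X = Y *m dm i.+1.
Proof.
case: dm_res => _ [_ [_ exact_dm]] Xdm.
by apply: mulmx_lift_rows => r; apply/exact_dm; rewrite -row_mul Xdm row0.
Qed.

Lemma free_res_lift_aug a (X : 'M[R]_(a, rk 0)) :
  (forall r, aug (row r X) = 0) -> exists Y : 'M[R]_(a, rk 1), X = Y *m dm 0.
Proof.
case: dm_res => _ [_ [aug_ker _]] Xaug.
by apply: mulmx_lift_rows => r; apply/aug_ker.
Qed.

Lemma free_res_lift_surj a (u : 'I_a -> N) :
  exists X : 'M[R]_(a, rk 0), forall r, aug (row r X) = u r.
Proof.
case: dm_res => _ [aug_surj _].
have /fin_all_exists[w augw] : forall r, exists w, aug w = u r by move=> r; apply: aug_surj.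
by exists (\matrix_r w r) => r; rewrite rowK.
Qed.

Lemma free_res_rank0 i : rk i = 0%N -> rk i.+2 = 0%N -> rk i.+1 = 0%N.
Proof.
case: dm_res => _ [_ [_ exact_dm]] rk_i rk_i2.
apply/eqP; apply: contraT; rewrite -lt0n => rk_gt0.
have [|w] := (exact_dm i (delta_mx 0 (Ordinal rk_gt0))).1.
  by apply/matrixP => ? k; move: (ltn_ord k); rewrite {2}rk_i.
have -> : w = 0 by apply/matrixP => ? k; move: (ltn_ord k); rewrite {2}rk_i2.
rewrite mul0mx => /matrixP/(_ 0 (Ordinal rk_gt0)).
by rewrite !mxE !eqxx => /eqP; rewrite oner_eq0.
Qed.

End FreeResolution.

Section Comparison.
Variables (N : lmodType R)
  (rk : nat -> nat) (dm : forall i, 'M[R]_(rk i.+1, rk i)) (aug : 'rV[R]_(rk 0) -> N)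
  (rk' : nat -> nat) (dm' : forall i, 'M[R]_(rk' i.+1, rk' i)) (aug' : 'rV[R]_(rk' 0) -> N).
Hypotheses (dm_res : is_free_res dm aug) (dm'_res : is_free_res dm' aug')
  (dm_min : minimal_res dm).

(* Comparison maps [f : F -> G], [g : G -> F] in degrees [t] and [t.+1] such that
   [f g] is homotopic to the identity of [F_t] up to an error with entries in the
   maximal ideal; the error term is what gets lifted to degree [t.+1]. *)
Definition partial_homotopy t :=
  exists (f : 'M[R]_(rk t, rk' t)) (g : 'M[R]_(rk' t, rk t))
  (f' : 'M[R]_(rk t.+1, rk' t.+1)) (g' : 'M[R]_(rk' t.+1, rk t.+1))
  (s : 'M[R]_(rk t, rk t.+1)),
  [/\ dm t *m f = f' *m dm' t, dm' t *m g = g' *m dm t,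
      dm t *m (1%:M - f *m g - s *m dm t) = 0
    & max_ideal_mx (1%:M - f *m g - s *m dm t)].

Lemma partial_homotopy0 : partial_homotopy 0.
Proof.
have [aug_lin aug'_lin] := (free_res_lin dm_res, free_res_lin dm'_res).
have [f augf] := free_res_lift_surj dm'_res (fun r => aug 'e_r).
have [g aug'g] := free_res_lift_surj dm_res (fun r => aug' 'e_r).
have {}augf := lin_mulmx_basis aug_lin aug'_lin augf.
have {}aug'g := lin_mulmx_basis aug'_lin aug_lin aug'g.
have [f' f'P] : exists f', dm 0 *m f = f' *m dm' 0.
  apply: (free_res_lift_aug dm'_res) => r.
  by rewrite row_mul augf rowE (free_res_aug_dm0 dm_res).
have [g' g'P] : exists g', dm' 0 *m g = g' *m dm 0.
  apply: (free_res_lift_aug dm_res) => r.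
  by rewrite row_mul aug'g rowE (free_res_aug_dm0 dm'_res).
have [s sP] : exists s, 1%:M - f *m g = s *m dm 0.
  apply: (free_res_lift_aug dm_res) => r.
  by rewrite rowE mulmxBr mulmx1 (linB aug_lin) mulmxA aug'g augf subrr.
exists f, g, f', g', s; rewrite sP subrr mulmx0; split=> //; exact: max_ideal_mx0.
Qed.

Lemma partial_homotopyS t : partial_homotopy t -> partial_homotopy t.+1.
Proof.
case=> f [g [f' [g' [s [fP gP dm_ker _]]]]].
set X := 1%:M - f' *m g' - dm t *m s.
have Xdm : X *m dm t = 0.
  have fgdm : f' *m g' *m dm t = dm t *m (f *m g) by rewrite -mulmxA -gP !mulmxA fP.
  by rewrite /X !mulmxBl mul1mx fgdm -dm_ker !mulmxBr mulmx1 !mulmxA.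
have [s' Xs'] := free_res_lift_ker dm_res Xdm.
have [f'' f''P] : exists f'', dm t.+1 *m f' = f'' *m dm' t.+1.
  apply: (free_res_lift_ker dm'_res).
  by rewrite -mulmxA -fP mulmxA (free_res_dm_dm dm_res) mul0mx.
have [g'' g''P] : exists g'', dm' t.+1 *m g' = g'' *m dm t.+1.
  apply: (free_res_lift_ker dm_res).
  by rewrite -mulmxA -gP mulmxA (free_res_dm_dm dm'_res) mul0mx.
have s'P : 1%:M - f' *m g' - s' *m dm t.+1 = dm t *m s.
  by rewrite -Xs' /X opprB addrC subrK.
exists f', g', f'', g'', s'; rewrite s'P; split=> //.
  by rewrite mulmxA (free_res_dm_dm dm_res) mul0mx.
exact/max_ideal_mulmxl/dm_min.
Qed.

Lemma minimal_res_rank_le t : (rk t <= rk' t)%N.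
Proof.
have [f [g [_ [_ [s [_ _ _ mE]]]]]] : partial_homotopy t.
  by elim: t => [|t IHt]; [exact: partial_homotopy0 | exact: partial_homotopyS].
have fg_unit : f *m g \in unitmx.
  have -> : f *m g = 1%:M - ((1%:M - f *m g - s *m dm t) + s *m dm t).
    by rewrite subrK opprB addrC subrK.
  by apply/unitmx_1Bmx/max_ideal_mxD => //; apply/max_ideal_mulmxr/dm_min.
by apply: (mulmx1_min (A := f) (B := g *m invmx (f *m g))); rewrite mulmxA mulmxV.
Qed.

End Comparison.

Section SymmetricComplex.
Variables (j f0 f1 : nat) (phi : 'M[R]_(f1, f0)).
Local Notation T := (SBasis j f0 f1).

Definition Sbasis t : pred T := inB t.
Definition Srank t := #|Sbasis t|.
Definition Sval t (x : 'I_(Srank t)) : T := enum_val x.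

Lemma Sval_inB t (x : 'I_(Srank t)) : inB t (Sval x).
Proof. exact: (enum_valP x). Qed.

Lemma Sval_inj t : injective (@Sval t).
Proof. exact: enum_val_inj. Qed.

Lemma inB_Sval t b : inB t b -> exists x : 'I_(Srank t), Sval x = b.
Proof.
by move=> b_t; exists (enum_rank_in (b_t : b \in Sbasis t) b); apply: enum_rankK_in.
Qed.

(* [Scomplex_resolves] speaks of functions on [SBasis] supported in degree [t];
   [of_row] and [to_row] identify these with row vectors indexed by [Sval]. *)
Definition of_row t (v : 'rV[R]_(Srank t)) (b : T) : R :=
  if [pick x | Sval x == b] is Some x then v 0 x else 0.

Definition to_row t (u : T -> R) : 'rV[R]_(Srank t) := \row_x u (Sval x).

Lemma of_row_Sval t (v : 'rV[R]_(Srank t)) x : of_row v (Sval x) = v 0 x.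
Proof.
rewrite /of_row; case: pickP => [y /eqP/Sval_inj -> //|].
by move/(_ x); rewrite eqxx.
Qed.

Lemma of_row_supported t (v : 'rV[R]_(Srank t)) : supported t (of_row v).
Proof.
move=> b b_t; rewrite /of_row; case: pickP => // x /eqP Sx.
by move: b_t; rewrite -Sx Sval_inB.
Qed.

Lemma of_row_lin t a (u v : 'rV[R]_(Srank t)) b :
  of_row (a *: u + v) b = a * of_row u b + of_row v b.
Proof. by rewrite /of_row; case: pickP => [x _|_]; rewrite ?mxE ?mulr0 ?addr0. Qed.

Lemma of_row_to_row t u : supported t u -> of_row (to_row t u) =1 u.
Proof.
move=> u_t b; case b_t: (inB t b); last by rewrite of_row_supported ?u_t ?b_t.
by have [x <-] := inB_Sval b_t; rewrite of_row_Sval mxE.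
Qed.

Lemma to_row_of_row t (v : 'rV[R]_(Srank t)) : to_row t (of_row v) = v.
Proof. by apply/rowP => x; rewrite mxE of_row_Sval. Qed.

Lemma to_row_eq t (u u' : T -> R) : u =1 u' -> to_row t u = to_row t u'.
Proof. by move=> uu'; apply/rowP => x; rewrite !mxE uu'. Qed.

Lemma of_row_inj t (u v : 'rV[R]_(Srank t)) : of_row u =1 of_row v -> u = v.
Proof. by move=> uv; rewrite -[u]to_row_of_row -[v]to_row_of_row; apply: to_row_eq. Qed.

Lemma of_row0 t b : of_row (0 : 'rV[R]_(Srank t)) b = 0.
Proof. by rewrite /of_row; case: pickP => *; rewrite ?mxE. Qed.

Lemma sum_incr (c : {ffun 'I_f0 -> 'I_j.+1}) m :
  (c m < j)%N -> (\sum_i (incr c m i : nat) = (\sum_i (c i : nat)).+1)%N.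
Proof.
move=> cm_lt_j; rewrite (bigD1 m) // [in RHS](bigD1 m) //= ffunE eqxx inordK // addSn.
by congr (_ + _).+1; apply: eq_bigr => i i_m; rewrite ffunE (negbTE i_m).
Qed.

Lemma inB_Scoef t (b b' : T) : inB t.+1 b -> Scoef phi b b' != 0 -> inB t b'.
Proof.
move=> /and3P[t_lt_j /eqP card_b /eqP sum_b]; apply: contraR => b'_t.
rewrite /Scoef big1 // => e e_b; rewrite big1 // => m _.
case: andP => [[/eqP b'2 /eqP b'1]|_]; last by rewrite mul0r.
exfalso; move/negP: b'_t; apply; apply/and3P; split; first by lia.
  by rewrite b'2; move: card_b; rewrite (cardsD1 e) e_b add1n => -[->].
have bm_le : (b.1 m <= \sum_i (b.1 i : nat))%N by rewrite (bigD1 m) //= leq_addr.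
by rewrite b'1 sum_incr; lia.
Qed.

Definition Sdm t : 'M[R]_(Srank t.+1, Srank t) :=
  \matrix_(x, y) Scoef phi (Sval x) (Sval y).

Lemma Sdiff_of_row t (v : 'rV[R]_(Srank t.+1)) :
  Sdiff phi (of_row v) =1 of_row (v *m Sdm t).
Proof.
move=> b'; rewrite /Sdiff (bigID (inB t.+1)) /= [X in _ + X]big1 ?addr0; last first.
  by move=> b b_t; rewrite of_row_supported ?mul0r.
rewrite (eq_bigl (mem (Sbasis t.+1))) // big_enum_val.
under eq_bigr do rewrite of_row_Sval.
case b'_t: (inB t b'); last first.
  rewrite of_row_supported ?b'_t // big1 // => x _.
  have [->|/(inB_Scoef (Sval_inB x))] := eqVneq (Scoef phi (Sval x) b') 0.
    by rewrite mulr0.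
  by rewrite b'_t.
by have [y <-] := inB_Sval b'_t; rewrite of_row_Sval !mxE; apply: eq_bigr => x _; rewrite mxE.
Qed.

Lemma Sdiff_to_row t w :
  supported t.+1 w -> Sdiff phi w =1 of_row (to_row t.+1 w *m Sdm t).
Proof.
by move=> w_t b; rewrite -Sdiff_of_row; apply: eq_bigr => b' _; rewrite of_row_to_row.
Qed.

Lemma Sdm_minimal : minimal_res (dm2 phi) -> minimal_res Sdm.
Proof.
move=> phi_min i x y; rewrite mxE; apply: max_ideal_sum => e _; apply: max_ideal_sum => m _.
exact/max_idealMl/max_idealMl/(phi_min 0%N).
Qed.

Lemma Srank_gt0 t : (0 < Srank t)%N -> [/\ t <= j, t <= f1 & f0 = 0 -> t = j]%N.
Proof.
case/card_gt0P => -[c E] /and3P[t_le_j /eqP card_E /eqP sum_c]; split=> //.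
  by rewrite -card_E; apply: leq_trans (max_card _) _; rewrite card_ord.
move=> f0_0; move: sum_c; rewrite big1 => [|i]; first lia.
by move: (ltn_ord i); rewrite {2}f0_0.
Qed.

(* Pair every [t]-subset of the basis of [F1] with the monomial [f_i0^(j - t)]. *)
Lemma binomial_le_Srank t : (0 < f0)%N -> (t <= j)%N -> ('C(f1, t) <= Srank t)%N.
Proof.
move=> f0_gt0 t_le_j; pose i0 := Ordinal f0_gt0.
pose c : {ffun 'I_f0 -> 'I_j.+1} := [ffun i => if i == i0 then inord (j - t) else ord0].
have pair_c_inj : injective (pair c : {set 'I_f1} -> T) by move=> E E' [].
rewrite -[f1 in 'C(f1, t)]card_ord -card_draws -(card_imset _ pair_c_inj).
apply/subset_leq_card/subsetP => _ /imsetP[E + ->]; rewrite inE => card_E.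
apply/and3P; split=> //=; apply/eqP.
rewrite (bigD1 i0) //= ffunE eqxx inordK ?ltnS ?leq_subr // big1 ?addn0 // => i i_i0.
by rewrite ffunE (negbTE i_i0).
Qed.

Variables (M S : lmodType R) (pi : 'rV[R]_f0 -> M) (mu : ('I_j -> M) -> S).

Definition Saugmx (v : 'rV[R]_(Srank 0)) : S := Saug pi mu (of_row v).

Lemma eq_Saug (u u' : T -> R) : u =1 u' -> Saug pi mu u = Saug pi mu u'.
Proof. by move=> uu'; apply: eq_bigr => b _; rewrite uu'. Qed.

Lemma Scomplex_free_res : Scomplex_resolves phi pi mu -> is_free_res Sdm Saugmx.
Proof.
case=> Saug_surj [Saug_ker Sexact]; split; [|split; [|split]].
- move=> a u v; rewrite /Saugmx (eq_Saug (of_row_lin a u v)) scaler_sumr -big_split.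
  by apply: eq_bigr => b _; rewrite scalerDl scalerA.
- move=> y; have [v [v0 <-]] := Saug_surj y.
  by exists (to_row 0 v); apply: eq_Saug; apply: of_row_to_row.
- move=> v; rewrite (Saug_ker _ (of_row_supported v)); split.
    case=> w [w1 vw]; exists (to_row 1 w).
    by apply: of_row_inj => b; rewrite vw (Sdiff_to_row w1).
  case=> w ->; exists (of_row w); split; first exact: of_row_supported.
  by move=> b; rewrite Sdiff_of_row.
- move=> i v; have v_exact := Sexact i.+1 (of_row v) isT (of_row_supported v).
  split=> [vdm|[w vw]].
    have [|w [w2 vw]] := v_exact.1; first by move=> b; rewrite Sdiff_of_row vdm of_row0.
    by exists (to_row i.+2 w); apply: of_row_inj => b; rewrite vw (Sdiff_to_row w2).
  apply: of_row_inj => b; rewrite -Sdiff_of_row of_row0; apply: v_exact.2 b.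
  by exists (of_row w); split=> [|b']; [exact: of_row_supported | rewrite vw Sdiff_of_row].
Qed.

End SymmetricComplex.

End LocalRing.

Theorem proposition6p5 (R : comUnitRingType) (d j : nat) (M S : lmodType R)
    (mu : ('I_j -> M) -> S) :
  noetherian R -> local_ring R -> krull_dim R d -> (2 <= j)%N ->
  fin_gen M -> pdim M 1 ->
  sym_power mu -> SW mu ->
  (forall n, betti M 1 n -> (d <= n)%N) ->
  forall p, pdim S p -> forall t, (t <= p)%N ->
    forall n, betti S t n -> ('C(d, t) <= n)%N.
Proof.
move=> _ R_local _ j_ge2 _ _ _ [f0 [f1 [phi [pi [M_res [M_min SW_res]]]]]] betti_M p
  [rkH [dmH [augH [H_res [H_min [rkHp _]]]]]] t le_tp n [rkG [dmG [augG [G_res [_ <-]]]]].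
have S_res := Scomplex_free_res SW_res.
have S_min := Sdm_minimal R_local (j := j) M_min.
have le_df1 : (d <= f1)%N by apply: betti_M; exists (rk2 f0 f1), (dm2 phi), pi.
have [le_pj le_pf1 f0_0] : [/\ p <= j, p <= f1 & f0 = 0 -> p = j]%N.
  apply: Srank_gt0; apply: leq_trans (minimal_res_rank_le R_local H_res S_res H_min p).
  by rewrite lt0n; apply/eqP.
have f0_gt0 : (0 < f0)%N.
  rewrite lt0n; apply/eqP => /[dup] /f0_0 pj f0_0'.
  by have /= := free_res_rank0 M_res (i := 0%N) f0_0' erefl; lia.
apply: leq_trans (leq_bin2l t le_df1) _.
apply: leq_trans (minimal_res_rank_le R_local S_res G_res S_min t).
by apply: binomial_le_Srank => //; apply: leq_trans le_pj.
Qed.
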